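(* Let $X$ be a Baire space and let $Y$ be a first countable topological space such that the strong Choquet game $Ch(Y)$ is $\beta$-unfavorable. Then $X\times Y$ is a Baire space.
   Context: A topological space is a Baire space if every countable intersection of dense open subsets is dense. The strong Choquet game $Ch(Y)$: two players $\beta$ and $\alpha$ alternate, $\beta$ moving first; at round $n$, $\beta$ chooses a point $x_n$ and an open set $V_n$ with $x_n\in V_n$ (and $V_n\subseteq U_{n-1}$ for $n\ge1$), then $\alpha$ chooses an open set $U_n$ with $x_n\in U_n\subseteq V_n$. Player $\alpha$ wins the play if $\bigcap_n U_n\neq\emptyset$; otherwise $\beta$ wins. A strategy for a player is a function assigning a legal move to each finite sequence of the opponent's previous moves; it is winning if the player wins every play compatible with it. $Ch(Y)$ is $\beta$-unfavorable if $\beta$ has no winning strategy. *)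

From Stdlib Require Import List Arith.

Set Implicit Arguments.

Record TopSpace := {
  carrier :> Type;
  is_open : (carrier -> Prop) -> Prop;
  open_full : is_open (fun _ => True);
  open_inter : forall U V, is_open U -> is_open V -> is_open (fun x => U x /\ V x);
  open_union : forall F : (carrier -> Prop) -> Prop,
      (forall U, F U -> is_open U) -> is_open (fun x => exists U, F U /\ U x)
}.

Arguments is_open {t} _.

Definition subset {T : Type} (A B : T -> Prop) : Prop := forall x, A x -> B x.

Definition dense {X : TopSpace} (D : X -> Prop) : Prop :=
  forall U : X -> Prop, is_open U -> (exists x, U x) -> exists x, U x /\ D x.

Definition Baire (X : TopSpace) : Prop :=
  forall D : nat -> (X -> Prop),
    (forall n, is_open (D n) /\ dense (D n)) ->
    dense (fun x => forall n, D n x).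

Definition first_countable (Y : TopSpace) : Prop :=
  forall y : Y, exists B : nat -> (Y -> Prop),
    (forall n, is_open (B n) /\ B n y) /\
    (forall U, is_open U -> U y -> exists n, subset (B n) U).

Definition prod_open (X Y : TopSpace) (W : X * Y -> Prop) : Prop :=
  forall p, W p -> exists (U : X -> Prop) (V : Y -> Prop),
    is_open U /\ is_open V /\ U (fst p) /\ V (snd p) /\
    (forall a b, U a -> V b -> W (a, b)).

Lemma prod_open_full (X Y : TopSpace) : prod_open X Y (fun _ => True).
Proof.
  intros p _. exists (fun _ => True), (fun _ => True).
  repeat split; try apply open_full.
Qed.

Lemma prod_open_inter (X Y : TopSpace) (W1 W2 : X * Y -> Prop) :
  prod_open X Y W1 -> prod_open X Y W2 -> prod_open X Y (fun p => W1 p /\ W2 p).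
Proof.
  intros H1 H2 p [h1 h2].
  destruct (H1 p h1) as [U1 [V1 [oU1 [oV1 [u1 [v1 s1]]]]]].
  destruct (H2 p h2) as [U2 [V2 [oU2 [oV2 [u2 [v2 s2]]]]]].
  exists (fun x => U1 x /\ U2 x), (fun y => V1 y /\ V2 y).
  split; [apply open_inter; auto|].
  split; [apply open_inter; auto|].
  split; [split; auto|]. split; [split; auto|].
  intros a b [ha1 ha2] [hb1 hb2]; split; auto.
Qed.

Lemma prod_open_union (X Y : TopSpace) (F : (X * Y -> Prop) -> Prop) :
  (forall W, F W -> prod_open X Y W) ->
  prod_open X Y (fun p => exists W, F W /\ W p).
Proof.
  intros HF p [W [FW Wp]].
  destruct (HF W FW p Wp) as [U [V [oU [oV [u [v s]]]]]].
  exists U, V. repeat split; auto.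
  intros a b ua vb. exists W. split; auto.
Qed.

Definition prod_space (X Y : TopSpace) : TopSpace :=
  {| carrier := (carrier X * carrier Y)%type;
     is_open := prod_open X Y;
     open_full := prod_open_full X Y;
     open_inter := @prod_open_inter X Y;
     open_union := @prod_open_union X Y |}.

(** A strategy for beta maps the finite list [U_0; ...; U_{n-1}] of alpha's
    previous moves to beta's move (x_n, V_n).  Given an infinite sequence u of
    alpha moves, beta's n-th move is sigma (prefix u n). *)
Definition beta_strat (Y : TopSpace) : Type :=
  list (Y -> Prop) -> (Y * (Y -> Prop)).

Definition prefix {A : Type} (u : nat -> A) (n : nat) : list A :=
  map u (seq 0 n).

Definition alpha_legal {Y : TopSpace} (sigma : beta_strat Y)
    (u : nat -> (Y -> Prop)) (k : nat) : Prop :=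
  let m := sigma (prefix u k) in
  is_open (u k) /\ u k (fst m) /\ subset (u k) (snd m).

Definition beta_legal {Y : TopSpace} (sigma : beta_strat Y)
    (u : nat -> (Y -> Prop)) (n : nat) : Prop :=
  let m := sigma (prefix u n) in
  is_open (snd m) /\ snd m (fst m) /\
  (forall n', n = S n' -> subset (snd m) (u n')).

Definition is_beta_strategy {Y : TopSpace} (sigma : beta_strat Y) : Prop :=
  forall (u : nat -> (Y -> Prop)) (n : nat),
    (forall k, k < n -> alpha_legal sigma u k) -> beta_legal sigma u n.

Definition beta_winning {Y : TopSpace} (sigma : beta_strat Y) : Prop :=
  is_beta_strategy sigma /\
  forall u : nat -> (Y -> Prop),
    (forall k, alpha_legal sigma u k) ->
    ~ (exists y, forall n, u n y).

Definition beta_unfavorable (Y : TopSpace) : Prop :=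
  ~ exists sigma : beta_strat Y, beta_winning sigma.

(* Fix a nonempty open box U0 x V0 and dense open sets D_n of X x Y.  Build a
   tree indexed by finite sequences of neighbourhood indices: the children of a
   node (A, y, V) with index k form a maximal disjoint family of boxes
   A' x V' inside D_(n+1), with A' within A and V' within the k-th basic
   neighbourhood of y.  At every node the union of the A's is dense in U0, so,
   as there are countably many nodes, X being Baire yields a point x lying in
   one A at every node.  Following x, beta answers alpha's moves (coded by
   basic neighbourhoods of beta's points) with the point and the V of the node
   reached.  Since beta has no winning strategy, some play has a point y in all
   of alpha's moves, and then (x, y) lies in U0 x V0 and in every D_n. *)
From Stdlib Require Import List Arith Classical ClassicalEpsilon.
From mathcomp Require classical_sets.
From mathcomp Require Import choice.

Lemma Baire_countable {X : TopSpace} {I : countType} {D : I -> (X -> Prop)} :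
  Baire X -> (forall i, is_open (D i) /\ dense (D i)) ->
  dense (fun x => forall i, D i x).
Proof.
  intros HX HD.
  set (Dn := fun n => match choice.unpickle n with
                      | Some i => D i
                      | None => fun _ : X => True
                      end).
  assert (HDn : forall n, is_open (Dn n) /\ dense (Dn n)).
  { intro n. unfold Dn. destruct (choice.unpickle n) as [i|]; auto.
    split; [apply open_full|]. intros U _ [x Ux]. eauto. }
  intros U oU ne. destruct (HX Dn HDn U oU ne) as [x [Ux Hx]].
  exists x. split; auto. intro i.
  specialize (Hx (choice.pickle i)). unfold Dn in Hx.
  rewrite choice.pickleK in Hx. exact Hx.
Qed.

Lemma dense_open_box {X Y : TopSpace} {W : X * Y -> Prop}
    {O : X -> Prop} {V : Y -> Prop} {a : X} {b : Y} :
  prod_open X Y W -> @dense (prod_space X Y) W ->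
  is_open O -> is_open V -> O a -> V b ->
  exists (O' : X -> Prop) (V' : Y -> Prop) a' b',
    is_open O' /\ is_open V' /\ O' a' /\ V' b' /\ subset O' O /\ subset V' V /\
    forall a b, O' a -> V' b -> W (a, b).
Proof.
  intros oW dW oO oV Oa Vb.
  assert (oOV : prod_open X Y (fun p => O (fst p) /\ V (snd p))).
  { intros p [h1 h2]. exists O, V. repeat split; auto. }
  destruct (dW _ oOV (ex_intro _ (a, b) (conj Oa Vb)))
    as [[a' b'] [[Oa' Vb'] Wab']].
  destruct (oW _ Wab') as [U' [V' [oU' [oV' [U'a [V'b sub]]]]]].
  exists (fun z => U' z /\ O z), (fun z => V' z /\ V z), a', b'.
  repeat split; try apply open_inter; auto.
  - intros z [_ h]. exact h.
  - intros z [_ h]. exact h.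
  - intros z w [h _] [h' _]. auto.
Qed.

Lemma maximal_disjoint_meets {I T : Type} {A : I -> T -> Prop} {E P : I -> Prop} {i : I} :
  classical_sets.maximal_disjoint_subcollection A E P -> P i -> (exists a, A i a) ->
  exists j a, E j /\ A i a /\ A j a.
Proof.
  intros [EP Edisj Emax] Pi [a Aia]. apply NNPP; intro Hn.
  apply (Emax (fun j => E j \/ j = i)).
  - split.
    + intros j Ej. now left.
    + intro HC. apply Hn. exists i, a. split; [apply HC; now right | auto].
  - intros j [Ej | ->]; auto.
  - intros j j' Cj Cj' [z [zj zj']].
    destruct Cj as [Ej | ->]; destruct Cj' as [Ej' | ->]; auto.
    + apply Edisj; auto. exists z. split; auto.
    + exfalso. apply Hn. exists j, z. auto.
    + exfalso. apply Hn. exists j', z. auto.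
Qed.

Lemma maximal_disjoint_dense_in {I : Type} {X : TopSpace}
    {A : I -> X -> Prop} {E P : I -> Prop} {Z : X -> Prop} :
  classical_sets.maximal_disjoint_subcollection A E P -> is_open Z ->
  (forall O, is_open O -> (exists a, O a) -> subset O Z ->
     exists i, P i /\ (exists a, A i a) /\ subset (A i) O) ->
  forall O, is_open O -> (exists a, O a /\ Z a) ->
    exists j a, E j /\ A j a /\ O a.
Proof.
  intros Emax oZ Hfine O oO [a [Oa Za]].
  destruct (Hfine (fun z => O z /\ Z z)) as [i [Pi [nei sub]]].
  - now apply open_inter.
  - eauto.
  - intros z [_ h]. exact h.
  - destruct (maximal_disjoint_meets Emax Pi nei) as [j [b [Ej [Aib Ajb]]]].
    exists j, b. repeat split; auto. apply (sub b Aib).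
Qed.

Lemma beta_unfavorable_play {Y : TopSpace} {sigma : beta_strat Y} :
  beta_unfavorable Y -> is_beta_strategy sigma ->
  exists u y, (forall k, alpha_legal sigma u k) /\ forall n, u n y.
Proof.
  intros Hunf Hs. apply NNPP; intro Hn.
  apply Hunf. exists sigma. split; auto.
  intros u Hl [y Hy]. apply Hn. eauto.
Qed.

Lemma first_countable_base_fun {Y : TopSpace} :
  first_countable Y ->
  exists base : Y -> nat -> (Y -> Prop),
    (forall y n, is_open (base y n) /\ base y n y) /\
    (forall y U, is_open U -> U y -> exists n, subset (base y n) U).
Proof.
  intro Hfc.
  exists (fun y => proj1_sig (constructive_indefinite_description _ (Hfc y))).
  split; intro y;
    destruct (constructive_indefinite_description _ (Hfc y)) as [B [HB1 HB2]];
    auto.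
Qed.

Lemma prefix_S {A : Type} (u : nat -> A) n :
  prefix u (S n) = prefix u n ++ u n :: nil.
Proof. unfold prefix. now rewrite seq_S, map_app. Qed.

Section BoxMeetsIntersection.

Context {X Y : TopSpace} {D : nat -> (X * Y -> Prop)}.
Hypothesis D_open : forall n, prod_open X Y (D n).
Hypothesis D_dense : forall n, @dense (prod_space X Y) (D n).
Context {U0 : X -> Prop} {V0 : Y -> Prop} {x0 : X} {y0 : Y}.
Hypotheses (U0_open : is_open U0) (V0_open : is_open V0).
Hypotheses (U0x0 : U0 x0) (V0y0 : V0 y0).
Context {base : Y -> nat -> (Y -> Prop)}.
Hypothesis base_open : forall y n, is_open (base y n) /\ base y n y.
Hypothesis base_nbhd : forall y U, is_open U -> U y -> exists n, subset (base y n) U.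

Record node := Node { xset : X -> Prop; ypoint : Y; yset : Y -> Prop }.

Definition admissible (n : nat) (st : node) : Prop :=
  is_open (xset st) /\ (exists a, xset st a) /\ subset (xset st) U0 /\
  is_open (yset st) /\ yset st (ypoint st) /\ subset (yset st) V0 /\
  (forall a b, xset st a -> yset st b -> D n (a, b)).

Lemma admissible_refinement (n : nat) {O : X -> Prop} {W : Y -> Prop} {a : X} {b : Y} :
  is_open O -> O a -> subset O U0 -> is_open W -> W b -> subset W V0 ->
  exists st, admissible n st /\ subset (xset st) O /\ subset (yset st) W.
Proof.
  intros oO Oa OU oW Wb WV.
  destruct (dense_open_box (D_open n) (D_dense n) oO oW Oa Wb)
    as [O' [W' [a' [b' [oO' [oW' [O'a' [W'b' [O'O [W'W sub]]]]]]]]]].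
  exists (Node O' b' W').
  repeat split; simpl; eauto; intros z h; auto.
Qed.

Definition child (n : nat) (st : node) (k : nat) (st' : node) : Prop :=
  admissible (S n) st' /\ subset (xset st') (xset st) /\
  subset (yset st') (base (ypoint st) k).

Lemma root_refinement O :
  is_open O -> (exists a, O a) -> subset O U0 ->
  exists st, admissible 0 st /\ (exists a, xset st a) /\ subset (xset st) O.
Proof.
  intros oO [a Oa] OU.
  destruct (admissible_refinement 0 oO Oa OU V0_open V0y0 (fun _ h => h))
    as [st [Hst [sub _]]].
  exists st. split; [exact Hst | split; [apply Hst | exact sub]].
Qed.

Lemma child_refinement {n : nat} {st : node} (k : nat) :
  admissible n st -> forall O, is_open O -> (exists a, O a) -> subset O (xset st) ->
  exists st', child n st k st' /\ (exists a, xset st' a) /\ subset (xset st') O.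
Proof.
  intros [oA [_ [AU [oV [Vy [VV0 _]]]]]] O oO [a Oa] OA.
  destruct (base_open (ypoint st) k) as [oB By].
  destruct (admissible_refinement (S n) (W := fun z => yset st z /\ base (ypoint st) k z)
              oO Oa (fun z h => AU z (OA z h)) (open_inter _ _ _ oV oB) (conj Vy By))
    as [st' [Hst' [subO subW]]].
  - intros z [h _]. auto.
  - exists st'. split; [split; [exact Hst' | split] | split].
    + intros z h. apply OA, subO, h.
    + intros z h. apply (subW z h).
    + apply Hst'.
    + exact subO.
Qed.

Definition roots : node -> Prop :=
  proj1_sig (classical_sets.ex_maximal_disjoint_subcollection xset (admissible 0)).

Definition children (n : nat) (st : node) (k : nat) : node -> Prop :=
  proj1_sig (classical_sets.ex_maximal_disjoint_subcollection xset (child n st k)).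

Lemma roots_maximal :
  classical_sets.maximal_disjoint_subcollection xset roots (admissible 0).
Proof. unfold roots. now destruct classical_sets.ex_maximal_disjoint_subcollection. Qed.

Lemma children_maximal n st k :
  classical_sets.maximal_disjoint_subcollection xset (children n st k) (child n st k).
Proof. unfold children. now destruct classical_sets.ex_maximal_disjoint_subcollection. Qed.

(* The sequence lists the neighbourhood indices along the path, most recent first. *)
Fixpoint tree (s : list nat) : node -> Prop :=
  match s with
  | nil => roots
  | k :: s' => fun st' => exists st, tree s' st /\ children (length s') st k st'
  end.

Lemma tree_admissible {s : list nat} {st : node} : tree s st -> admissible (length s) st.
Proof.
  destruct s as [|k s]; simpl.
  - intro H. now apply roots_maximal.
  - intros [st0 [_ H]]. now apply children_maximal in H as [Hst _].
Qed.

Lemma tree_disjoint {s : list nat} {st1 st2 : node} {a : X} :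
  tree s st1 -> tree s st2 -> xset st1 a -> xset st2 a -> st1 = st2.
Proof.
  revert st1 st2. induction s as [|k s IH]; simpl.
  - intros st1 st2 H1 H2 a1 a2. apply roots_maximal; auto. exists a. split; auto.
  - intros st1 st2 [p1 [T1 C1]] [p2 [T2 C2]] a1 a2.
    apply children_maximal in C1 as Hc1. apply children_maximal in C2 as Hc2.
    assert (p1 = p2) as <-.
    { apply (IH p1 p2); auto; [apply Hc1 | apply Hc2]; auto. }
    apply (children_maximal (length s) p1 k); auto. exists a. split; auto.
Qed.

Lemma tree_dense (s : list nat) {O : X -> Prop} :
  is_open O -> (exists a, O a /\ U0 a) -> exists st a, tree s st /\ xset st a /\ O a.
Proof.
  revert O. induction s as [|k s IH]; simpl; intros O oO ne.
  - exact (maximal_disjoint_dense_in roots_maximal U0_open root_refinement O oO ne).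
  - destruct (IH O oO ne) as [st [a [Tst [Aa Oa]]]].
    pose proof (tree_admissible Tst) as Hst.
    destruct (maximal_disjoint_dense_in (children_maximal (length s) st k)
                (proj1 Hst) (child_refinement k Hst) O oO
                (ex_intro _ a (conj Oa Aa)))
      as [st' [a' [C [A' Oa']]]].
    exists st', a'. repeat split; eauto.
Qed.

Lemma tree_branch_point :
  Baire X -> exists x, U0 x /\ forall s, exists st, tree s st /\ xset st x.
Proof.
  intro HX.
  set (cover := fun (s : list nat) (z : X) => exists U : X -> Prop,
         ((exists st, tree s st /\ U = xset st) \/
          (is_open U /\ forall a, U a -> ~ U0 a)) /\ U z).
  assert (Hcover : forall s, is_open (cover s) /\ dense (cover s)).
  { intro s. split.
    - apply open_union. intros U [[st [Tst ->]] | [oU _]]; auto.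
      apply (tree_admissible Tst).
    - intros O oO [z Oz].
      destruct (classic (exists a, O a /\ U0 a)) as [Hc | Hc].
      + destruct (tree_dense s oO Hc) as [st [a [Tst [Aa Oa]]]].
        exists a. split; auto. exists (xset st). split; eauto.
      + exists z. split; auto. exists O. split; auto. right. split; auto.
        intros a Oa Ua. apply Hc. eauto. }
  destruct (Baire_countable HX Hcover U0 U0_open (ex_intro _ x0 U0x0)) as [x [Ux Hx]].
  exists x. split; auto. intro s.
  destruct (Hx s) as [U [[[st [Tst ->]] | [_ HU]] Uz]]; eauto.
  exfalso. now apply (HU x).
Qed.

Section BranchStrategy.

Variable x : X.
Variable sel : list nat -> node.
Hypothesis sel_tree : forall s, tree s (sel s).
Hypothesis sel_x : forall s, xset (sel s) x.

Lemma sel_child k s : child (length s) (sel s) k (sel (k :: s)).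
Proof.
  destruct (sel_tree (k :: s)) as [st [Tst C]].
  apply children_maximal in C as Hc.
  replace (sel s) with st; auto.
  apply (tree_disjoint Tst (sel_tree s) (a := x)); auto.
  apply Hc, sel_x.
Qed.

Definition base_index (y : Y) (U : Y -> Prop) : nat :=
  epsilon (inhabits 0) (fun k => subset (base y k) U).

Lemma base_index_spec {y : Y} {U : Y -> Prop} :
  is_open U -> U y -> subset (base y (base_index y U)) U.
Proof.
  intros oU Uy. unfold base_index.
  apply (epsilon_spec (inhabits 0) (fun k => subset (base y k) U)), base_nbhd; auto.
Qed.

(* Alpha's move U_n is recorded as the index of a basic neighbourhood of beta's
   point y_n inside U_n. *)
Definition code (h : list (Y -> Prop)) : list nat :=
  fold_left (fun c U => base_index (ypoint (sel c)) U :: c) h nil.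

Definition branch_strategy : beta_strat Y :=
  fun h => (ypoint (sel (code h)), yset (sel (code h))).

Lemma code_prefix_S u n :
  code (prefix u (S n)) = base_index (ypoint (sel (code (prefix u n)))) (u n)
                          :: code (prefix u n).
Proof. unfold code. now rewrite prefix_S, fold_left_app. Qed.

Lemma code_prefix_length u n : length (code (prefix u n)) = n.
Proof. induction n as [|n IH]; auto. rewrite code_prefix_S. simpl. now f_equal. Qed.

Lemma branch_strategy_legal : is_beta_strategy branch_strategy.
Proof.
  intros u n Hl. unfold beta_legal, branch_strategy; simpl.
  destruct (tree_admissible (sel_tree (code (prefix u n))))
    as [_ [_ [_ [oV [Vy _]]]]].
  repeat split; auto. intros n' ->. rewrite code_prefix_S.
  destruct (Hl n' (Nat.lt_succ_diag_r n')) as [oU [Uy _]].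
  destruct (sel_child (base_index (ypoint (sel (code (prefix u n')))) (u n'))
                      (code (prefix u n'))) as [_ [_ sub]].
  intros z h. apply (base_index_spec oU Uy), sub, h.
Qed.

Lemma branch_strategy_outcome u y :
  (forall k, alpha_legal branch_strategy u k) -> (forall n, u n y) ->
  V0 y /\ forall n, D n (x, y).
Proof.
  intros Hl Hy.
  assert (Hn : forall n, admissible n (sel (code (prefix u n))) /\
                         yset (sel (code (prefix u n))) y).
  { intro n. rewrite <- (code_prefix_length u n) at 1. split.
    - apply tree_admissible, sel_tree.
    - apply (Hl n), Hy. }
  split.
  - destruct (Hn 0) as [[_ [_ [_ [_ [_ [VV0 _]]]]]] Vy]. auto.
  - intro n. destruct (Hn n) as [[_ [_ [_ [_ [_ [_ HD]]]]]] Vy]. auto.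
Qed.

End BranchStrategy.

Lemma box_meets_intersection :
  Baire X -> beta_unfavorable Y -> exists a b, U0 a /\ V0 b /\ forall n, D n (a, b).
Proof.
  intros HX Hunf.
  destruct tree_branch_point as [x [Ux Hx]]; auto.
  set (sel := fun s => proj1_sig (constructive_indefinite_description _ (Hx s))).
  assert (sel_tree : forall s, tree s (sel s)).
  { intro s. unfold sel. now destruct constructive_indefinite_description as [st []]. }
  assert (sel_x : forall s, xset (sel s) x).
  { intro s. unfold sel. now destruct constructive_indefinite_description as [st []]. }
  destruct (beta_unfavorable_play Hunf (branch_strategy_legal x sel sel_tree sel_x))
    as [u [y [Hl Hy]]].
  destruct (branch_strategy_outcome x sel sel_tree sel_x u y Hl Hy) as [Vy HD].
  eauto.
Qed.

End BoxMeetsIntersection.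

Theorem theorem1p1 (X Y : TopSpace) :
  Baire X -> first_countable Y -> beta_unfavorable Y -> Baire (prod_space X Y).
Proof.
  intros HX Hfc Hunf D HD W oW [p Wp].
  destruct (oW p Wp) as [U0 [V0 [oU0 [oV0 [U0p [V0p sub]]]]]].
  destruct (first_countable_base_fun Hfc) as [base [base_open base_nbhd]].
  destruct (box_meets_intersection (fun n => proj1 (HD n)) (fun n => proj2 (HD n))
              oU0 oV0 U0p V0p base_open base_nbhd HX Hunf)
    as [a [b [Ua [Vb Hab]]]].
  exists (a, b). split; auto.
Qed.
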